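(* Let $E\in(-2,2)$, $k=\arccos(-E/2)\in(0,\pi)$, let $w_\sigma$ be a compactly supported real random variable on a probability space $(\Sigma,\mathbb P)$, and let $$T^{\epsilon,\delta}_\sigma=\begin{pmatrix}e^{-\imath k}&0\\0&e^{\imath k}\end{pmatrix}\exp\Big[\frac{\imath\delta+\epsilon w_\sigma}{2\sin(k)}(B_2+B_3)\Big],\qquad \epsilon,\delta\in\mathbb R.$$ If $\delta\ne0$, or if $\epsilon\ne0$ and the support of $w_\sigma$ contains more than one point, then the semigroup generated by $\mathrm{supp}(T^{\epsilon,\delta}_\sigma)$ is not relatively compact.
   Context: $B_2=\begin{pmatrix}0&\imath\\-\imath&0\end{pmatrix}$, $B_3=\begin{pmatrix}\imath&0\\0&-\imath\end{pmatrix}$. $\mathrm{supp}(T^{\epsilon,\delta}_\sigma)\subset\mathrm{SL}(2,\mathbb C)$ is the support of the distribution of the random matrix; relative compactness refers to the topology of $\mathbb C^{2\times 2}$. *)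

From HB Require Import structures.
From mathcomp Require Import all_boot all_order all_algebra.
From mathcomp Require Import complex.
From mathcomp Require Import all_classical all_reals all_analysis.
Import Order.TTheory GRing.Theory Num.Theory numFieldNormedType.Exports.

Set Implicit Arguments.
Unset Strict Implicit.
Unset Printing Implicit Defensive.

Local Open Scope classical_set_scope.
Local Open Scope ring_scope.
Local Open Scope complex_scope.

(* The complex numbers over a real field R, with their canonical
   (norm) topology. *)
Definition Cx (R : realType) := Num.NumField.sort (R[i]).

Definition mx2 (R : realType) := 'M[Cx R]_2.

Definition iC (R : realType) : Cx R := Complex 0 1.

Definition mexp (R : realType) (A : mx2 R) : mx2 R :=
  lim ((fun N : nat => \sum_(n < N) ((n`!)%:R)^-1 *: A ^+ n) @ \oo).

Definition B2 (R : realType) : mx2 R :=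
  \matrix_(i < 2, j < 2)
    (if (i == 0) && (j == 1) then iC R
     else if (i == 1) && (j == 0) then - iC R else 0).

Definition B3 (R : realType) : mx2 R :=
  \matrix_(i < 2, j < 2)
    (if (i == 0) && (j == 0) then iC R
     else if (i == 1) && (j == 1) then - iC R else 0).

Definition kE (R : realType) (E : R) : R := acos (- E / 2).

Definition cexpi (R : realType) (t : R) : Cx R := Complex (cos t) (sin t).

Definition Dk (R : realType) (E : R) : mx2 R :=
  \matrix_(i < 2, j < 2)
    (if i == j then (if i == 0 then cexpi (- kE E) else cexpi (kE E)) else 0).

(* T^{eps,delta} evaluated at the value x of w_sigma *)
Definition Tmat (R : realType) (E eps delta x : R) : mx2 R :=
  Dk E *m mexp ((((iC R) * (delta%:C : Cx R) + ((eps * x)%:C : Cx R))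
                  / ((2 * sin (kE E))%:C : Cx R)) *: (B2 R + B3 R)).

Definition supp_law (R : realType) (d : measure_display) (Sig : measurableType d)
  (P : probability Sig R) (X : topologicalType) (f : Sig -> X) : set X :=
  [set x | forall U : set X, open U -> U x -> (0 < P (f @^-1` U))%E].

Definition semigroup_gen (R : realType) (S : set (mx2 R)) : set (mx2 R) :=
  [set M | exists (n : nat) (s : 'I_n.+1 -> mx2 R),
      (forall i, S (s i)) /\ M = \prod_(i < n.+1) s i].

Definition relatively_compact (X : topologicalType) (A : set X) : Prop :=
  compact (closure A).

(* Every T_x := Tmat E eps delta x has determinant 1 and factors as
   T_x = D (1 + c_x N), where N = B2 + B3 squares to 0, D = diag(e^-ik, e^ik)
   and c_x = (i delta + eps x) / (2 sin k); its trace is -E + eps x + i delta.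
   If the closure K of the generated semigroup were compact, K would be
   bounded and closed under products, and it would contain T^-1 for every
   generator T, as a limit of powers of T (this uses |T^-n| = |adj T^n| = |T^n|).
   If delta <> 0, the trace of T_x is not real, so T_x has an eigenvalue of
   modulus > 1 and the traces of its powers are unbounded. If eps <> 0 and
   x <> y lie in the support of w, then T_x T_y^-1 = 1 + (c_x - c_y) D N D^-1
   is a nontrivial unipotent element of K, whose powers grow linearly. *)

From HB Require Import structures.
From mathcomp Require Import all_boot all_order all_algebra.
From mathcomp Require Import complex.
From mathcomp Require Import all_classical all_reals all_analysis.
From mathcomp Require Import ring lra finmap.
Import Order.TTheory GRing.Theory Num.Theory numFieldNormedType.Exports.
Import Normc.

Set Implicit Arguments.
Unset Strict Implicit.
Unset Printing Implicit Defensive.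

Local Open Scope classical_set_scope.
Local Open Scope ring_scope.
Local Open Scope complex_scope.

Lemma exists_natS_mul_gt (R : archiRealFieldType) (B e : R) :
  0 < e -> exists k : nat, B < k.+1%:R * e.
Proof. by move=> e0; exists (Num.truncn (B / e)); rewrite -ltr_pdivrMr // truncnS_gt. Qed.

Lemma exists_small_factor (R : realFieldType) (a r : R) : 0 <= a -> 0 < r ->
  exists2 d, 0 < d & d <= 1 /\ d * (a + 1) < r.
Proof.
move=> a0 r0; have ar : 0 < a + r + 1 by lra.
exists (r / (a + r + 1)); first exact: divr_gt0.
have e : r / (a + r + 1) * (a + r + 1) = r by rewrite mulfVK ?gt_eqF.
have := divr_gt0 r0 ar; move: e; set d := r / _ => e d0.
by split; nra.
Qed.

Lemma bernoulli_ineq (R : realDomainType) (x : R) k : -1 <= x -> 1 + k%:R * x <= (1 + x) ^+ k.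
Proof.
move=> x1; elim: k => [|k IHk]; first by rewrite mul0r addr0.
rewrite exprS -natr1; have : 0 <= k%:R * x ^+ 2 by rewrite mulr_ge0 ?sqr_ge0.
by move: IHk; nra.
Qed.

Lemma mulr_closed_exp (T : pzSemiRingType) (K : set T) (A : T) :
  (forall X Y, K X -> K Y -> K (X * Y)) -> K A -> forall k, K (A ^+ k.+1).
Proof. by move=> Kmul KA; elim=> [|k IHk]; rewrite ?expr1 // exprS; exact: Kmul. Qed.

(** * Unipotent elements of an algebra *)

Section Unipotent.
Variables (F : comNzRingType) (A : algType F) (W : A).
Hypothesis WW : W * W = 0.

Lemma mul_unipotent (a b : F) : (1 + a *: W) * (1 + b *: W) = 1 + (a + b) *: W.
Proof.
rewrite mulrDl !mulrDr !mul1r mulr1 -scalerAl -scalerAr scalerA WW scaler0.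
by rewrite addr0 -addrA -scalerDl (addrC b).
Qed.

Lemma expr_unipotent (c : F) k : (1 + c *: W) ^+ k = 1 + (k%:R * c) *: W.
Proof.
elim: k => [|k IHk]; first by rewrite expr0 mul0r scale0r addr0.
by rewrite exprSr IHk mul_unipotent -natr1 mulrDl mul1r.
Qed.

End Unipotent.

Lemma unipotent_unit (F : comNzRingType) (A : unitAlgType F) (W : A) (c : F) :
  W * W = 0 -> 1 + c *: W \is a GRing.unit /\ (1 + c *: W)^-1 = 1 + (- c) *: W.
Proof.
move=> WW; have inv : forall a, (1 + a *: W) * (1 + (- a) *: W) = 1.
  by move=> a; rewrite mul_unipotent // subrr scale0r addr0.
have Uu : 1 + c *: W \is a GRing.unit.
  by apply/unitrP; exists (1 + (- c) *: W); rewrite inv -{2}(opprK c) inv.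
by split=> //; apply: (mulrI Uu); rewrite divrr // inv.
Qed.

Lemma conj_unipotent_mulV (F : comNzRingType) (A : unitAlgType F) (D W : A) (a b : F) :
  W * W = 0 -> D \is a GRing.unit ->
  D * (1 + a *: W) * (D * (1 + b *: W))^-1 = 1 + (a - b) *: (D * W * D^-1).
Proof.
move=> WW Du; have [Uu Uinv] := unipotent_unit b WW.
rewrite invrM // Uinv mulrA -(mulrA D) mul_unipotent // mulrDr mulr1 mulrDl divrr //.
by rewrite -scalerAr -scalerAl.
Qed.

Lemma conj_sqr0 (A : unitRingType) (D W : A) : D \is a GRing.unit -> W * W = 0 ->
  (D * W * D^-1) * (D * W * D^-1) = 0.
Proof. by move=> Du WW; rewrite -!mulrA mulKr // (mulrA W) WW mul0r mulr0. Qed.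

Lemma conj_neq0 (A : unitRingType) (D W : A) : D \is a GRing.unit -> W != 0 ->
  D * W * D^-1 != 0.
Proof.
move=> Du; apply: contraNneq => W0.
have -> : W = D^-1 * (D * W * D^-1) * D by rewrite mulrA mulKr // mulrVK.
by rewrite W0 mulr0 mul0r.
Qed.

(** * An entrywise norm on complex matrices *)

Section ComplexModulus.
Variable R : rcfType.
Implicit Types (z : R[i]) (x : R).

Lemma normr_normc z : `|z| = (normc z)%:C.
Proof. by case: z. Qed.

Lemma normc_ge0 z : 0 <= normc z.
Proof. by case: z => a b; exact: sqrtr_ge0. Qed.

Lemma normc_gt0 z : (0 < normc z) = (z != 0).
Proof. by rewrite -normr_gt0 normr_normc ltcR. Qed.

Lemma normcX z n : normc (z ^+ n) = normc z ^+ n.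
Proof. by elim: n => [|n IH]; rewrite ?normc1 // !exprS normcM IH. Qed.

Lemma normc_real x : normc x%:C = `|x|.
Proof. by rewrite /normc /= expr0n addr0 sqrtr_sqr. Qed.

Lemma normc_nat n : normc (n%:R : R[i]) = n%:R.
Proof. by rewrite -(rmorph_nat (real_complex R)) normc_real normr_nat. Qed.

Lemma normc_sum (I : finType) (F : I -> R[i]) :
  normc (\sum_i F i) <= \sum_i normc (F i).
Proof.
elim/big_ind2: _ => [|x z y w hx hy|//]; first by rewrite normc0.
exact: le_trans (le_normcD z w) (lerD hx hy).
Qed.

End ComplexModulus.

Section EntrywiseNorm.
Variable R : rcfType.

(* Real-valued, unlike the library's [mx_norm], whose values lie in [R[i]]. *)
Definition mxnorm m n (A : 'M[R[i]]_(m, n)) : R := \sum_i \sum_j normc (A i j).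

Section Dims.
Variables m n : nat.
Implicit Types A B : 'M[R[i]]_(m, n).

Lemma mxnorm_ge0 A : 0 <= mxnorm A.
Proof. by apply: sumr_ge0 => i _; apply: sumr_ge0 => j _; exact: normc_ge0. Qed.

Lemma mxnorm_row A i : \sum_j normc (A i j) <= mxnorm A.
Proof.
rewrite /mxnorm (bigD1 i) //= lerDl.
by apply: sumr_ge0 => k _; apply: sumr_ge0 => j _; exact: normc_ge0.
Qed.

Lemma mxnorm_entry A i j : normc (A i j) <= mxnorm A.
Proof.
apply: le_trans (mxnorm_row A i); rewrite (bigD1 j) //= lerDl.
by apply: sumr_ge0 => k _; exact: normc_ge0.
Qed.

Lemma mxnorm_gt0 A : (0 < mxnorm A) = (A != 0).
Proof.
rewrite lt0r mxnorm_ge0 andbT; congr negb; apply/eqP/eqP => [A0|->]; last first.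
  by rewrite /mxnorm big1 // => i _; rewrite big1 // => j _; rewrite mxE normc0.
apply/matrixP => i j; rewrite mxE; apply: eq0_normc; apply/eqP.
by rewrite eq_le normc_ge0 andbT -A0 mxnorm_entry.
Qed.

Lemma mxnormD A B : mxnorm (A + B) <= mxnorm A + mxnorm B.
Proof.
rewrite /mxnorm -big_split ler_sum // => i _; rewrite -big_split ler_sum // => j _.
by rewrite mxE le_normcD.
Qed.

Lemma mxnormN A : mxnorm (- A) = mxnorm A.
Proof. by apply: eq_bigr => i _; apply: eq_bigr => j _; rewrite mxE normcN. Qed.

Lemma mxnormB A B : mxnorm (A - B) <= mxnorm A + mxnorm B.
Proof. by rewrite -(mxnormN B) mxnormD. Qed.

Lemma mxnormZ a A : mxnorm (a *: A) = normc a * mxnorm A.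
Proof.
rewrite /mxnorm mulr_sumr; apply: eq_bigr => i _; rewrite mulr_sumr.
by apply: eq_bigr => j _; rewrite mxE normcM.
Qed.

End Dims.

Lemma mxnormM m n p (A : 'M[R[i]]_(m, n)) (B : 'M[R[i]]_(n, p)) :
  mxnorm (A *m B) <= mxnorm A * mxnorm B.
Proof.
rewrite /mxnorm mulr_suml; apply: ler_sum => i _.
apply: (@le_trans _ _ (\sum_j \sum_k normc (A i k) * normc (B k j))).
  apply: ler_sum => j _; rewrite mxE; apply: le_trans (normc_sum _) _.
  by apply: ler_sum => k _; rewrite normcM.
rewrite exchange_big mulr_suml; apply: ler_sum => k _; rewrite -mulr_sumr.
by apply: ler_wpM2l; [exact: normc_ge0 | exact: mxnorm_row].
Qed.

Lemma normc_mxtrace n (A : 'M[R[i]]_n) : normc (\tr A) <= mxnorm A.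
Proof.
apply: le_trans (normc_sum _) _; rewrite /mxnorm; apply: ler_sum => i _.
rewrite (bigD1 i) //= lerDl.
by apply: sumr_ge0 => k _; exact: normc_ge0.
Qed.

End EntrywiseNorm.

(** * Closures and compact sets of matrices *)

Section MatrixTopology.
Variables (R : realType) (m n : nat).
Local Notation M := 'M[Cx R]_(m, n).

Lemma nbhs_mxnormP (A : M) (B : set M) :
  nbhs A B <-> exists2 r : R, 0 < r & forall X, mxnorm (X - A) < r -> B X.
Proof.
split.
  move=> /nbhs_ballP[[r b] e0 AB]; move: e0; rewrite /= ltcE /= => /andP[/eqP b0 r0].
  subst b.
  exists r => // X AX; apply: AB; split; first by rewrite ltcR.
  move=> i j; rewrite /ball /= normr_normc ltcR -normcN opprB.
  by apply: le_lt_trans AX; have := mxnorm_entry (X - A) i j; rewrite !mxE.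
move=> [r r0 AB]; pose k := (m * n)%N.
have k0 : 0 < r / (k.+1)%:R by rewrite divr_gt0.
apply/nbhs_ballP; exists (r / (k.+1)%:R)%:C; first by rewrite /= ltcR.
move=> X [_ AX]; apply: AB.
apply: (@le_lt_trans _ _ (\sum_(i < m) \sum_(j < n) r / k.+1%:R)).
  apply: ler_sum => i _; apply: ler_sum => j _; rewrite !mxE -normcN opprB.
  by have := AX i j; rewrite /ball /= normr_normc ltcR => /ltW.
rewrite (eq_bigr (fun=> r / k.+1%:R *+ n)); last by move=> i _; rewrite sumr_const card_ord.
rewrite sumr_const card_ord -mulrnA mulnC -/k -[_ *+ k]mulr_natr mulrAC.
by rewrite ltr_pdivrMr // ltr_pM2l // ltr_nat.
Qed.

Lemma closure_mxnormP (S : set M) (X : M) :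
  closure S X <-> forall r : R, 0 < r -> exists2 s, S s & mxnorm (s - X) < r.
Proof.
split=> [SX r r0 | SX B /nbhs_mxnormP[r r0 XB]].
  have Xr : nbhs X (fun s => mxnorm (s - X) < r) by apply/nbhs_mxnormP; exists r.
  by have [s [Ss Xs]] := SX _ Xr; exists s.
by have [s Ss sX] := SX r r0; exists s; split => //; exact: XB.
Qed.

Lemma compact_cluster_mxnorm (K : set M) (u : nat -> M) :
  compact K -> (forall k, K (u k)) ->
  exists L : M, forall r : R, 0 < r -> forall N, exists2 k, (N <= k)%N & mxnorm (u k - L) < r.
Proof.
move=> cK Ku; have [L [_ Lu]] : K `&` cluster (u @ \oo) !=set0.
  by apply: cK; exists 0%N => // k _; exact: Ku.
exists L => r r0 N.
have uN : (u @ \oo) [set u k | k in [set k | (N <= k)%N]].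
  by exists N => // k /= Nk; exists k.
have Lr : nbhs L (fun X => mxnorm (X - L) < r) by apply/nbhs_mxnormP; exists r.
by have [_ [[k Nk <-] ukL]] := Lu _ _ uN Lr; exists k.
Qed.

Lemma compact_mxnorm_bounded (K : set M) :
  compact K -> exists B : R, forall A, K A -> mxnorm A <= B.
Proof.
move=> cK; apply: contrapT => unbounded.
have big : forall k : nat, exists A, K A /\ k%:R < mxnorm A.
  move=> k; apply: contrapT => small; apply: unbounded; exists k%:R => A KA.
  by rewrite leNgt; apply/negP => Ak; apply: small; exists A.
have [u /all_and2[Ku uk]] := choice big.
have [L Lu] := compact_cluster_mxnorm cK Ku.
have [N NL] := exists_natS_mul_gt (mxnorm L + 1) ltr01.
have [k Nk ukL] := Lu 1 ltr01 N.+1.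
have := mxnormD (u k - L) L; rewrite subrK.
have : N.+1%:R <= k%:R :> R by rewrite ler_nat.
by move: (uk k) NL ukL; rewrite mulr1; lra.
Qed.

Lemma lipschitz_continuous (f : R -> M) (c : R) :
  (forall x y, mxnorm (f x - f y) <= c * `|x - y|) -> continuous f.
Proof.
move=> fc x B /nbhs_mxnormP[r r0 fxB]; apply/nbhs_ballP.
have c1 : 0 < `|c| + 1 by rewrite ltr_wpDl.
exists (r / (`|c| + 1)); first by rewrite /= divr_gt0.
move=> y /= xy; apply: fxB; apply: le_lt_trans (fc y x) _.
apply: le_lt_trans (ler_wpM2r (normr_ge0 _) (ler_norm c)) _.
rewrite distrC; move: xy; rewrite /ball /= ltr_pdivlMr //.
by have := normr_ge0 c; have := normr_ge0 (x - y); nra.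
Qed.

End MatrixTopology.

Section SquareMatrixClosure.
Variables (R : realType) (n : nat).
Local Notation M := 'M[Cx R]_n.+1.
Implicit Types (S : set M) (X Y T : M).

Lemma closure_mulr_closed S : (forall A B, S A -> S B -> S (A * B)) ->
  forall X Y, closure S X -> closure S Y -> closure S (X * Y).
Proof.
move=> Smul X Y /closure_mxnormP SX /closure_mxnormP SY; apply/closure_mxnormP => r r0.
have [d d0 [d1 dr]] := exists_small_factor (addr_ge0 (mxnorm_ge0 X) (mxnorm_ge0 Y)) r0.
have [s Ss sX] := SX d d0; have [t St tY] := SY d d0.
exists (s * t); first exact: Smul.
have -> : s * t - X * Y = (s - X) * t + X * (t - Y).
  by rewrite mulrBl mulrBr addrA subrK.
have tle : mxnorm t <= mxnorm Y + d.
  by have := mxnormD (t - Y) Y; rewrite subrK; lra.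
apply: le_lt_trans (mxnormD _ _) _.
have := mxnormM (s - X) t; have := mxnormM X (t - Y).
have := mxnorm_ge0 X; have := mxnorm_ge0 Y; have := mxnorm_ge0 t.
have := mxnorm_ge0 (s - X); have := mxnorm_ge0 (t - Y).
by nra.
Qed.

(* If T^(k1+1) and T^(k2+1) are both close to a cluster point of the powers
   of T, then T^(k2-k1-1) is close to T^-1. *)
Lemma closure_invr S T (B : R) : compact (closure S) -> T \is a GRing.unit ->
  (forall k, S (T ^+ k.+1)) -> (forall k, mxnorm (T ^- k.+1) <= B) -> closure S T^-1.
Proof.
move=> cS Tu ST TB.
have [L LT] := compact_cluster_mxnorm cS (fun k => subset_closure (ST k)).
apply/closure_mxnormP => r r0.
have a0 : 0 <= 2 * mxnorm T^-1 * B.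
  by rewrite mulr_ge0 ?mulr_ge0 ?mxnorm_ge0 //; apply: le_trans (TB 0%N); exact: mxnorm_ge0.
have [d d0 [_ dr]] := exists_small_factor a0 r0.
have [k1 _ k1L] := LT d d0 0%N; have [k2 k12 k2L] := LT d d0 k1.+2.
have [j k2E] : exists j, k2.+1 = (k1.+1 + j.+2)%N.
  by exists (k2 - k1.+2)%N; rewrite !addnS -addSn subnKC.
exists (T ^+ j.+1); first exact: ST.
have -> : T ^+ j.+1 - T^-1 = T^-1 * T ^- k1.+1 * (T ^+ k2.+1 - T ^+ k1.+1).
  rewrite k2E exprD -mulrA mulrBr mulKr ?unitrX // mulVr ?unitrX //.
  by rewrite mulrBr mulr1 [T ^+ j.+2]exprS mulKr.
have Tk : mxnorm (T ^+ k2.+1 - T ^+ k1.+1) < 2 * d.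
  have := mxnormB (T ^+ k2.+1 - L) (T ^+ k1.+1 - L).
  by rewrite opprB addrA subrK; lra.
apply: le_lt_trans (mxnormM _ _) _.
apply: le_lt_trans (ler_wpM2r (mxnorm_ge0 _) (mxnormM _ _)) _.
apply: le_lt_trans (_ : _ <= mxnorm T^-1 * B * (2 * d)) _.
  by rewrite ler_pM ?mulr_ge0 ?mxnorm_ge0 ?ler_wpM2l ?mxnorm_ge0 ?TB ?ltW.
by move: dr; nra.
Qed.

End SquareMatrixClosure.

(** * 2x2 matrices *)

Section TwoByTwo.
Variable F : comNzRingType.
Implicit Types (a b c d : F) (A B : 'M[F]_2).

Definition mx22 a b c d : 'M[F]_2 :=
  \matrix_(i, j) if i == 0 then (if j == 0 then a else b)
                 else (if j == 0 then c else d).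

Lemma ord2P (i : 'I_2) : i = 0 \/ i = 1.
Proof. by case: i => [[|[|//]] Hi]; [left|right]; exact: val_inj. Qed.

Lemma matrix22P A B : A 0 0 = B 0 0 -> A 0 1 = B 0 1 -> A 1 0 = B 1 0 -> A 1 1 = B 1 1 ->
  A = B.
Proof.
by move=> *; apply/matrixP => i j; case: (ord2P i) => ->; case: (ord2P j) => ->.
Qed.

Lemma mx22_eta A : A = mx22 (A 0 0) (A 0 1) (A 1 0) (A 1 1).
Proof. by apply: matrix22P; rewrite !mxE. Qed.

Lemma mx22_rect (P : 'M[F]_2 -> Prop) :
  (forall a b c d, P (mx22 a b c d)) -> forall A, P A.
Proof. by move=> PA A; rewrite (mx22_eta A). Qed.

Lemma mx22_1 : 1 = mx22 1 0 0 1. Proof. by apply: matrix22P; rewrite !mxE. Qed.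

Lemma add_mx22 a b c d a' b' c' d' :
  mx22 a b c d + mx22 a' b' c' d' = mx22 (a + a') (b + b') (c + c') (d + d').
Proof. by apply: matrix22P; rewrite !mxE. Qed.

Lemma scale_mx22 k a b c d : k *: mx22 a b c d = mx22 (k * a) (k * b) (k * c) (k * d).
Proof. by apply: matrix22P; rewrite !mxE. Qed.

Lemma mul_mx22 a b c d a' b' c' d' :
  mx22 a b c d * mx22 a' b' c' d' =
  mx22 (a * a' + b * c') (a * b' + b * d') (c * a' + d * c') (c * b' + d * d').
Proof.
apply/matrixP => i j; rewrite !mxE !big_ord_recl big_ord0 !mxE /=.
by case: (ord2P i) => ->; case: (ord2P j) => -> /=; rewrite addr0.
Qed.

Lemma det_mx22 a b c d : \det (mx22 a b c d) = a * d - b * c.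
Proof.
rewrite (expand_det_row _ 0) !big_ord_recl big_ord0 addr0 /cofactor !det_mx11 !mxE /=.
by rewrite /= expr0 expr1 !mul1r mulN1r mulrN.
Qed.

Lemma mxtrace_mx22 a b c d : \tr (mx22 a b c d) = a + d.
Proof. by rewrite /mxtrace !big_ord_recl big_ord0 addr0 !mxE. Qed.

Lemma adj_mx22 a b c d : \adj (mx22 a b c d) = mx22 d (- b) (- c) a.
Proof.
apply: matrix22P; rewrite !mxE /cofactor det_mx11 !mxE /= ?expr0 ?expr1 ?mul1r ?mulN1r //.
by rewrite expr2 mulrNN !mul1r.
Qed.

Lemma mx22_Cayley_Hamilton A : A ^+ 2 = \tr A *: A - \det A *: 1.
Proof.
elim/mx22_rect: A => a b c d.
rewrite expr2 mul_mx22 det_mx22 mxtrace_mx22 mx22_1.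
by apply: matrix22P; rewrite !mxE /=; ring.
Qed.

Lemma mxtrace_exp_roots A l m : l * m = \det A -> l + m = \tr A ->
  forall k, \tr (A ^+ k) = l ^+ k + m ^+ k.
Proof.
move=> lm_det lm_tr.
suff tr2 k : \tr (A ^+ k) = l ^+ k + m ^+ k /\ \tr (A ^+ k.+1) = l ^+ k.+1 + m ^+ k.+1.
  by move=> k; case: (tr2 k).
elim: k => [|k [IHk IHk1]]; first by rewrite !expr0 !expr1 -lm_tr mxtrace1.
split=> //; rewrite [A ^+ k.+2]exprSr [A ^+ k.+1]exprSr -mulrA -expr2.
rewrite mx22_Cayley_Hamilton mulrBr -!mulmxE -!scalemxAr mulmx1 mulmxE -exprSr.
rewrite -scaleNr mxtraceD !mxtraceZ IHk IHk1 -lm_tr -lm_det.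
rewrite !exprS; ring.
Qed.

End TwoByTwo.

Lemma det1_invr (F : comUnitRingType) (A : 'M[F]_2) :
  \det A = 1 -> A \is a GRing.unit /\ A^-1 = \adj A.
Proof.
move=> A1; have Au : A \is a GRing.unit by rewrite unitmxE A1 unitr1.
by split=> //; apply: (mulIr Au); rewrite mulVr // -mulmxE mul_adj_mx A1.
Qed.

Lemma det_exp1 (F : comNzRingType) n (A : 'M[F]_n.+1) k : \det A = 1 -> \det (A ^+ k) = 1.
Proof.
move=> A1; elim: k => [|k IHk]; first by rewrite expr0 det1.
by rewrite exprS det_mulmx A1 IHk mulr1.
Qed.

Section ComplexTwoByTwo.
Variable R : rcfType.
Implicit Types A : 'M[R[i]]_2.

Lemma mxnorm_mx22 (a b c d : R[i]) :
  mxnorm (mx22 a b c d) = normc a + normc b + normc c + normc d.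
Proof. by rewrite /mxnorm !big_ord_recl !big_ord0 !mxE /= !addr0 addrA. Qed.

Lemma mxnorm_adj A : mxnorm (\adj A) = mxnorm A.
Proof.
elim/mx22_rect: A => a b c d.
by rewrite adj_mx22 !mxnorm_mx22 !normcN; lra.
Qed.

Lemma mxnorm_expVn A k : \det A = 1 -> mxnorm (A ^- k) = mxnorm (A ^+ k).
Proof. by move=> A1; have [_ ->] := det1_invr (det_exp1 k A1); rewrite mxnorm_adj. Qed.

Lemma roots_off_unit_circle (t : R[i]) : complex.Im t != 0 ->
  exists l m : R[i], [/\ l * m = 1, l + m = t & 1 < normc l].
Proof.
move=> It; pose s := sqrtc (t ^+ 2 - 4).
pose l := (t + s) / 2; pose m := (t - s) / 2.
have lm : l * m = 1.
  have -> : l * m = (t ^+ 2 - s ^+ 2) / 4 by rewrite /l /m; field.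
  by rewrite sqr_sqrtc; field.
have lmt : l + m = t by rewrite /l /m; field.
have nlm : normc l * normc m = 1 by rewrite -normcM lm normc1.
have [l1|l1|l1] := ltrgtP (normc l) 1.
- exists m, l; rewrite mulrC addrC; split=> //.
  by have := normc_ge0 l; nra.
- by exists l, m.
have l0 : l != 0.
  by apply/eqP => l0; move/eqP: lm; rewrite l0 mul0r eq_sym oner_eq0.
(* |l| = 1 would force m = conj l, making t = l + conj l real. *)
have ml : m = l^*%C.
  by apply: (mulfI l0); rewrite lm -sqr_normc normr_normc l1 expr1n.
by move: It; rewrite -lmt ml; case: (l) => a b /=; rewrite subrr eqxx.
Qed.

End ComplexTwoByTwo.

Lemma mxnorm_exp_unbounded (R : realType) (A : 'M[R[i]]_2) :
  \det A = 1 -> complex.Im (\tr A) != 0 -> forall B : R, exists k, B < mxnorm (A ^+ k.+1).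
Proof.
move=> A1 trA B; have [l [m [lm lmt l1]]] := roots_off_unit_circle trA.
have m1 : normc m <= 1.
  have : normc l * normc m = 1 by rewrite -normcM lm normc1.
  by have := normc_ge0 m; nra.
have [k Bk] : exists k : nat, B < k.+1%:R * (normc l - 1).
  by apply: exists_natS_mul_gt; rewrite subr_gt0.
exists k; apply: (lt_le_trans Bk); apply: le_trans (normc_mxtrace _).
rewrite (mxtrace_exp_roots (etrans lm (esym A1)) lmt).
have l0 : -1 <= normc l - 1 by lra.
have := bernoulli_ineq k.+1 l0; rewrite [1 + (_ - 1)]addrC subrK.
have := le_normcD (l ^+ k.+1 + m ^+ k.+1) (- m ^+ k.+1); rewrite addrK normcN !normcX.
have : normc m ^+ k.+1 <= 1 by rewrite exprn_ile1 ?normc_ge0.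
by have := normc_ge0 l; lra.
Qed.

Lemma mxnorm_unipotent_unbounded (R : realType) n (W : 'M[R[i]]_n.+1) (c : R[i]) :
  W * W = 0 -> W != 0 -> c != 0 -> forall B : R, exists k, B < mxnorm ((1 + c *: W) ^+ k.+1).
Proof.
move=> WW W0 c0 B; rewrite -mxnorm_gt0 in W0; rewrite -normc_gt0 in c0.
have [k Bk] := exists_natS_mul_gt (B + mxnorm (1 : 'M[R[i]]_n.+1)) (mulr_gt0 c0 W0).
exists k; rewrite expr_unipotent //.
have := mxnormB (1 + (k.+1%:R * c) *: W) 1; rewrite addrC addKr mxnormZ normcM normc_nat.
by move: Bk; rewrite mulrA; lra.
Qed.

(** * Support of a law *)

Section SupportOfLaw.
Variables (R : realType) (d : measure_display) (Sig : measurableType d).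
Variable P : probability Sig R.

Lemma supp_law_comp (X Y : topologicalType) (w : Sig -> X) (f : X -> Y) x :
  continuous f -> supp_law P w x -> supp_law P (f \o w) (f x).
Proof. by move=> fc wx U Uo Ufx; apply: (wx (f @^-1` U)) => //; exact: open_comp. Qed.

Lemma preimage_segment_negligible (w : Sig -> R) (U : R -> set R) (a b : R) :
  measurable_fun setT w -> (forall x, open (U x)) -> (forall x, U x x) ->
  (forall x, P (w @^-1` U x) = 0%E) -> P.-negligible (w @^-1` `[a, b]%classic).
Proof.
move=> mw Uo Ux PU0.
have [D _ DU] : finite_subset_cover setT U `[a, b]%classic.
  by move: (@segment_compact R a b); rewrite compact_cover; apply=> // x _; exists x.
apply: (negligibleS (B := w @^-1` _) (A := w @^-1` cover [set x | x \in D] U)).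
  by move=> s /DU.
rewrite /cover bigcup_fset; elim/big_ind: _ => [|A B|x _].
- by rewrite preimage_set0; exact: negligible_set0.
- by rewrite preimage_setU; exact: negligibleU.
apply/negligibleP; last exact: PU0.
rewrite -[_ @^-1` _]setTI; apply: mw => //; exact: measurable_realfun.open_measurable.
Qed.

Lemma supp_law_nonempty (w : Sig -> R) :
  measurable_fun setT w -> exists x, supp_law P w x.
Proof.
move=> mw; apply: contrapT => empty.
have null_nbhs x : exists U : set R, [/\ open U, U x & P (w @^-1` U) = 0%E].
  apply: contrapT => nx; apply: empty; exists x => U Uo Ux.
  by rewrite lt0e measure_ge0 andbT; apply/eqP => PU0; apply: nx; exists U.
have [U /all_and3[Uo Ux PU0]] := choice null_nbhs.
have covT : [set: Sig] `<=` \bigcup_n w @^-1` `[- n%:R, n%:R]%classic.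
  move=> s _; exists (Num.truncn `|w s|).+1 => //=.
  by rewrite in_itv /= -ler_norml ltW // truncnS_gt.
have /negligibleP : P.-negligible [set: Sig].
  apply: negligibleS covT (negligible_bigcup _) => n.
  exact: preimage_segment_negligible mw Uo Ux PU0.
move=> /(_ measurableT) PT0; have := probability_setT P.
by rewrite PT0 => /eqP; rewrite eq_sym onee_eq0.
Qed.

End SupportOfLaw.

(** * The transfer matrices and their semigroup *)

Section SemigroupGen.
Variables (R : realType) (G : set (mx2 R)).

Lemma semigroup_gen_subset : G `<=` semigroup_gen G.
Proof. by move=> A GA; exists 0%N, (fun=> A); rewrite big_ord1. Qed.

Lemma semigroup_gen_mulG X Y : G X -> semigroup_gen G Y -> semigroup_gen G (X * Y).
Proof.
move=> GX [n [t [Gt ->]]].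
exists n.+1, (fun i => if unlift ord0 i is Some j then t j else X); split.
  by move=> i; case: (unlift ord0 i).
rewrite [RHS]big_ord_recl unlift_none; congr (_ * _).
by apply: eq_bigr => i _; rewrite liftK.
Qed.

Lemma semigroup_gen_mul X Y :
  semigroup_gen G X -> semigroup_gen G Y -> semigroup_gen G (X * Y).
Proof.
move=> [m [s [Gs ->]]]; elim: m s Gs => [|m IHm] s Gs GY.
  by rewrite big_ord1; exact: semigroup_gen_mulG.
rewrite big_ord_recl -mulrA; apply: semigroup_gen_mulG => //.
by apply: IHm => // i.
Qed.

End SemigroupGen.

Lemma sin_kE_gt0 (R : realType) (E : R) : -2 < E < 2 -> 0 < sin (kE E).
Proof.
move=> /andP[E2 E2']; have E1 : -1 <= - E / 2 <= 1 by apply/andP; split; lra.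
rewrite /kE sin_acos // sqrtr_gt0.
have -> : 1 - (- E / 2) ^+ 2 = (4 - E * E) / 4 by field.
by rewrite divr_gt0 //; nra.
Qed.

Section TransferMatrix.
Variables (R : realType) (E eps delta : R).
Local Notation C := (Cx R).
Local Notation M := (mx2 R).
Local Notation N := (B2 R + B3 R).
Local Notation k := (kE E).

Lemma mexp_nilpotent (A : M) : A * A = 0 -> mexp A = 1 + A.
Proof.
move=> AA; apply: norm_lim_near_cst; exists 2%N => // [[|[|j]]] // _.
rewrite !big_ord_recl big1 ?addr0 => [|i _]; first by rewrite /= !invr1 !scale1r.
by rewrite /bump /= !exprS mulrA AA !mul0r scaler0.
Qed.

Lemma B2B3_mx22 : N = mx22 (iC R) (iC R) (- iC R) (- iC R).
Proof. by apply: matrix22P; rewrite !mxE /= ?addr0 ?add0r. Qed.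

Lemma B2B3_sqr : N * N = 0.
Proof. by rewrite B2B3_mx22 mul_mx22; apply: matrix22P; rewrite !mxE /=; ring. Qed.

Lemma B2B3_neq0 : N != 0.
Proof.
apply/eqP => /matrixP /(_ 0 0) /eqP; rewrite B2B3_mx22 !mxE /=.
by rewrite eq_complex /= oner_eq0 andbF.
Qed.

Lemma Dk_mx22 : Dk E = mx22 (cexpi (- k)) 0 0 (cexpi k).
Proof. by apply: matrix22P; rewrite !mxE. Qed.

Lemma cexpiNmul (t : R) : cexpi (- t) * cexpi t = 1.
Proof.
apply/eqP; rewrite /cexpi cosN sinN eq_complex /= mulNr opprK -!expr2 cos2Dsin2.
by rewrite mulNr mulrC subrr !eqxx.
Qed.

Lemma det_Dk : \det (Dk E) = 1.
Proof. by rewrite Dk_mx22 det_mx22 mulr0 subr0 cexpiNmul. Qed.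

Definition tcoef x : C :=
  (iC R * delta%:C + (eps * x)%:C) / (2 * sin k)%:C.

Lemma Tmat_factor x : Tmat E eps delta x = Dk E * (1 + tcoef x *: N).
Proof. by rewrite /Tmat mexp_nilpotent // -scalerAl -scalerAr B2B3_sqr !scaler0. Qed.

Lemma det_unipotent_B2B3 (c : C) : \det (1 + c *: N) = 1.
Proof. by rewrite B2B3_mx22 mx22_1 scale_mx22 add_mx22 det_mx22; ring. Qed.

Lemma det_Tmat x : \det (Tmat E eps delta x) = 1.
Proof. by rewrite Tmat_factor det_mulmx det_Dk det_unipotent_B2B3 mulr1. Qed.

Lemma mxtrace_Dk : \tr (Dk E) = (2 * cos k)%:C.
Proof.
rewrite Dk_mx22 mxtrace_mx22 /cexpi cosN sinN.
by apply/eqP; rewrite eq_complex /=; apply/andP; split; apply/eqP; ring.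
Qed.

Lemma mxtrace_Dk_B2B3 : \tr (Dk E * N) = (2 * sin k)%:C.
Proof.
rewrite Dk_mx22 B2B3_mx22 mul_mx22 mxtrace_mx22 !mul0r !addr0 !add0r /cexpi cosN sinN.
by apply/eqP; rewrite eq_complex /=; apply/andP; split; apply/eqP; ring.
Qed.

Lemma Im_mxtrace_Tmat x : sin k != 0 -> complex.Im (\tr (Tmat E eps delta x)) = delta.
Proof.
move=> s0; have s20 : (2 * sin k)%:C != 0 :> C by rewrite fmorph_eq0 mulf_neq0 ?pnatr_eq0.
rewrite Tmat_factor mulrDr mulr1 -scalerAr mxtraceD mxtraceZ mxtrace_Dk mxtrace_Dk_B2B3.
by rewrite /tcoef divfK //= ; ring.
Qed.

Lemma Dk_unit : Dk E \is a GRing.unit.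
Proof. by have [] := det1_invr det_Dk. Qed.

Lemma Tmat_mulV x y : Tmat E eps delta x * (Tmat E eps delta y)^-1 =
  1 + (tcoef x - tcoef y) *: (Dk E * N * (Dk E)^-1).
Proof. by rewrite !Tmat_factor; exact: conj_unipotent_mulV B2B3_sqr Dk_unit. Qed.

Lemma tcoefB x y : tcoef x - tcoef y = (eps * (x - y) / (2 * sin k))%:C.
Proof.
rewrite /tcoef -mulrBl fmorph_div; congr (_ / _).
by rewrite opprD addrACA subrr add0r -rmorphB mulrBr.
Qed.

Lemma tcoefB_neq0 x y : eps != 0 -> sin k != 0 -> x != y -> tcoef x - tcoef y != 0.
Proof.
move=> eps0 sk0 xy; have sk20 : 2 * sin k != 0 by rewrite mulf_neq0 ?pnatr_eq0.
by rewrite tcoefB fmorph_eq0 !mulf_neq0 ?invr_eq0 ?subr_eq0.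
Qed.

Lemma Tmat_sub x y :
  Tmat E eps delta x - Tmat E eps delta y = (tcoef x - tcoef y) *: (Dk E * N).
Proof. by rewrite !Tmat_factor -mulrBr opprD addrACA subrr add0r -scalerBl scalerAr. Qed.

Lemma continuous_Tmat : continuous (Tmat E eps delta).
Proof.
apply: (@lipschitz_continuous _ _ _ _ (`|eps / (2 * sin k)| * mxnorm (Dk E * N))).
move=> x y; rewrite Tmat_sub mxnormZ tcoefB normc_real mulrAC normrM.
by rewrite mulrAC.
Qed.

End TransferMatrix.

Lemma Tmat_exp_semigroup (R : realType) (E eps delta : R) (d : measure_display)
  (Sig : measurableType d) (P : probability Sig R) (w : Sig -> R) x k :
  supp_law P w x ->
  semigroup_gen (supp_law P (fun s => Tmat E eps delta (w s))) (Tmat E eps delta x ^+ k.+1).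
Proof.
move=> wx; apply: mulr_closed_exp (@semigroup_gen_mul _ _) _ _.
by apply/semigroup_gen_subset/(supp_law_comp _ wx)/continuous_Tmat.
Qed.

Theorem proposition6 (R : realType) (E : R) (d : measure_display)
  (Sig : measurableType d) (P : probability Sig R) (w : Sig -> R)
  (eps delta : R) :
  -2 < E < 2 ->
  measurable_fun setT w ->
  compact (supp_law P w) ->
  (delta != 0 \/
   (eps != 0 /\ exists x y : R, x <> y /\ supp_law P w x /\ supp_law P w y)) ->
  ~ relatively_compact
      (semigroup_gen (supp_law P (fun s => Tmat E eps delta (w s)))).
Proof.
move=> hE mw _ cases cS; set S := semigroup_gen _ in cS.
have [B SB] := compact_mxnorm_bounded cS.
have ST x k : supp_law P w x -> S (Tmat E eps delta x ^+ k.+1) by exact: Tmat_exp_semigroup.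
have sk0 : sin (kE E) != 0 by rewrite gt_eqF ?sin_kE_gt0.
case: cases => [delta0 | [eps0 [x [y [/eqP xy [wx wy]]]]]].
  have [x wx] := supp_law_nonempty P mw.
  have trT : complex.Im (\tr (Tmat E eps delta x)) != 0 by rewrite Im_mxtrace_Tmat.
  have [k Bk] := mxnorm_exp_unbounded (det_Tmat E eps delta x) trT B.
  by have := SB _ (subset_closure (ST x k wx)); lra.
have Smul X Y : closure S X -> closure S Y -> closure S (X * Y).
  by apply: closure_mulr_closed; exact: semigroup_gen_mul.
have Ty_inv : closure S (Tmat E eps delta y)^-1.
  have [Tyu _] := det1_invr (det_Tmat E eps delta y).
  apply: (closure_invr (B := B) cS Tyu (ST y ^~ wy)) => k.
  by rewrite mxnorm_expVn ?det_Tmat //; apply/SB/subset_closure/ST.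
have SU := mulr_closed_exp Smul (Smul _ _ (subset_closure (ST x 0%N wx)) Ty_inv).
have [k Bk] := mxnorm_unipotent_unbounded (conj_sqr0 (Dk_unit E) (B2B3_sqr R))
  (conj_neq0 (Dk_unit E) (B2B3_neq0 R)) (tcoefB_neq0 delta eps0 sk0 xy) B.
by have := SB _ (SU k); rewrite expr1 Tmat_mulV; lra.
Qed.
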